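(* Let $L>0$, $\theta_1>0$, $\theta_2>0$, $0\le\epsilon<1$, $\omega\ge0$, $0<v_{\max}<1$, $c(t)=\theta_1(1+\epsilon\cos(\omega t))$, $D(t,x)=\frac{L-x}{c(t)}$, $\Gamma(x,U)=\frac{\theta_2x}{(1+\theta_2x)(1-U)}-\frac{U}{1-U}$ and $f(t,x,U)=-c(t)\Gamma(x,U)$. Suppose one of the conditions (i), (ii), (iii) holds: (i) $0\le\frac{\epsilon\omega}{(1-\epsilon)^2}<\frac{\theta_1\theta_2}{(1+\theta_2L)^2}$; (ii) $\frac{\theta_1\theta_2}{(1+\theta_2L)^2}<\frac{\epsilon\omega}{(1-\epsilon)^2}<\frac{\theta_1}{L}$ and $\theta_2<\frac1L$; (iii) $\frac{\theta_1\theta_2}{(1+\theta_2L)^2}<\frac{\epsilon\omega}{(1-\epsilon)^2}<\frac{4\theta_1\theta_2}{(1+\theta_2L)^2}$ and $\theta_2>\frac1L$. Then $$\frac{\partial D}{\partial t}(t,x)+\frac{\partial D}{\partial x}(t,x)f(t,x,U)<1$$ for all $t\ge0$, all $x\in(0,L)$ and all $U\in[0,v_{\max}]$.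
   Context: This is the feasibility condition (the delay rate $\frac{d}{dt}D(t,x(t))$ is bounded by one) for the screw extruder model $\dot x(t)=f(t,x(t),U(t-D(t,x(t))))$, where $x$ is the length of the fully filled zone of the extruder and $U$ the inlet filling ratio. *)

From Stdlib Require Import Reals Lra.
Open Scope R_scope.

Definition cfun (th1 eps om t : R) : R := th1 * (1 + eps * cos (om * t)).

Definition Dfun (L th1 eps om t x : R) : R := (L - x) / cfun th1 eps om t.

Definition Gam (th2 x U : R) : R :=
  th2 * x / ((1 + th2 * x) * (1 - U)) - U / (1 - U).

Definition ffun (th1 th2 eps om t x U : R) : R :=
  - cfun th1 eps om t * Gam th2 x U.

(** The rate [dD/dt + (dD/dx) f] splits as [(L - x) c'(t)/c(t)^2 + Gamma(x, U)]
    since [dD/dx = -1/c].  With [k := eps omega / (1 - eps)^2], the lower bound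
    [c >= th1 (1 - eps)] bounds the first term by [(L - x) k / th1], while
    [Gamma(x, U) = 1 - 1/((1 + th2 x)(1 - U)) <= 1 - 1/(1 + th2 x)] for [U < 1].
    The rate is therefore below one as soon as [k (L - x)(1 + th2 x) < th1].
    The profile [(L - x)(1 + th2 x)] is at most [(1 + th2 L)^2 / (4 th2)] by AM-GM,
    which settles (i) and (iii), and at most [L] when [th2 L <= 1], which
    settles (ii). *)

From Stdlib Require Import Reals Lra.
From Coquelicot Require Import Coquelicot.
Open Scope R_scope.

Lemma cfun_neq0_factors th1 eps om t :
  cfun th1 eps om t <> 0 -> th1 <> 0 /\ 1 + eps * cos (om * t) <> 0.
Proof.
  unfold cfun; intros hc; split; intros h0; apply hc; rewrite h0; ring.
Qed.

Lemma derivable_pt_lim_Dfun_t L th1 eps om t x :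
  cfun th1 eps om t <> 0 ->
  derivable_pt_lim (fun s => Dfun L th1 eps om s x) t
    ((L - x) * (th1 * eps * om * sin (om * t)) / cfun th1 eps om t ^ 2).
Proof.
  intros hc; destruct (cfun_neq0_factors _ _ _ _ hc) as [h1 hcos].
  apply is_derive_Reals; unfold Dfun, cfun.
  auto_derive; [auto | field; auto].
Qed.

Lemma derivable_pt_lim_Dfun_x L th1 eps om t x :
  cfun th1 eps om t <> 0 ->
  derivable_pt_lim (fun y => Dfun L th1 eps om t y) x (-1 / cfun th1 eps om t).
Proof.
  intros hc; destruct (cfun_neq0_factors _ _ _ _ hc) as [h1 hcos].
  apply is_derive_Reals; unfold Dfun, cfun.
  auto_derive; [auto | field; auto].
Qed.

Lemma Dfun_x_mul_ffun th1 th2 eps om t x U :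
  cfun th1 eps om t <> 0 ->
  -1 / cfun th1 eps om t * ffun th1 th2 eps om t x U = Gam th2 x U.
Proof. intros hc; unfold ffun; field; exact hc. Qed.

Lemma Gam_eq th2 x U :
  1 + th2 * x <> 0 -> U <> 1 ->
  Gam th2 x U = 1 - 1 / ((1 + th2 * x) * (1 - U)).
Proof.
  intros hx hU; unfold Gam; field.
  split; [| exact hx]; intros h; apply hU; lra.
Qed.

Lemma Gam_le th2 x U :
  0 <= th2 * x -> 0 <= U < 1 -> Gam th2 x U <= 1 - 1 / (1 + th2 * x).
Proof.
  intros hx hU; rewrite Gam_eq by lra.
  apply Rplus_le_compat_l, Ropp_le_contravar; unfold Rdiv.
  rewrite !Rmult_1_l; apply Rinv_le_contravar; nra.
Qed.

Lemma cfun_ge th1 eps om t :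
  0 <= th1 -> 0 <= eps -> th1 * (1 - eps) <= cfun th1 eps om t.
Proof.
  intros h1 he; unfold cfun; apply Rmult_le_compat_l; [exact h1 |].
  assert (hcos := COS_bound (om * t)); nra.
Qed.

Lemma Dfun_t_rate_le L th1 eps om t x :
  x <= L -> 0 < th1 -> 0 <= eps < 1 -> 0 <= om ->
  (L - x) * (th1 * eps * om * sin (om * t)) / cfun th1 eps om t ^ 2
    <= (L - x) * (eps * om / (1 - eps) ^ 2) / th1.
Proof.
  intros hx h1 he hom.
  set (c := cfun th1 eps om t).
  assert (hc : th1 * (1 - eps) <= c) by (apply cfun_ge; lra).
  assert (hnum : 0 <= (L - x) * th1 * eps * om) by (repeat apply Rmult_le_pos; lra).
  assert (hsin := SIN_bound (om * t)).
  apply Rle_trans with ((L - x) * th1 * eps * om / c ^ 2).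
  - unfold Rdiv; apply Rmult_le_compat_r; [| nra].
    apply Rlt_le, Rinv_0_lt_compat; apply pow_lt; nra.
  - apply Rle_trans with ((L - x) * th1 * eps * om / (th1 * (1 - eps)) ^ 2).
    + unfold Rdiv; apply Rmult_le_compat_l; [exact hnum |].
      apply Rinv_le_contravar; [apply pow_lt; nra | apply pow_incr; nra].
    + right; field; lra.
Qed.

Lemma profile_le_amgm L th2 x :
  4 * th2 * ((L - x) * (1 + th2 * x)) <= (1 + th2 * L) ^ 2.
Proof.
  assert (hsq := pow2_ge_0 (th2 * (L - x) - (1 + th2 * x))); simpl in *; nra.
Qed.

Lemma profile_le_L L th2 x :
  0 <= th2 -> th2 * L <= 1 -> 0 <= x <= L -> (L - x) * (1 + th2 * x) <= L.
Proof. intros h2 hL hx; nra. Qed.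

Lemma profile_bound_amgm L th1 th2 x k :
  0 < th1 -> 0 < th2 -> 0 < (L - x) * (1 + th2 * x) ->
  k < 4 * th1 * th2 / (1 + th2 * L) ^ 2 ->
  k * ((L - x) * (1 + th2 * x)) < th1.
Proof.
  intros h1 h2 hg hk.
  assert (hamgm := profile_le_amgm L th2 x).
  assert (hsq : 0 < (1 + th2 * L) ^ 2) by nra.
  apply Rlt_le_trans with (4 * th1 * th2 / (1 + th2 * L) ^ 2 * ((L - x) * (1 + th2 * x))).
  - apply Rmult_lt_compat_r; assumption.
  - apply Rmult_le_reg_r with ((1 + th2 * L) ^ 2); [exact hsq |].
    replace (4 * th1 * th2 / (1 + th2 * L) ^ 2 * ((L - x) * (1 + th2 * x))
               * (1 + th2 * L) ^ 2)
      with (th1 * (4 * th2 * ((L - x) * (1 + th2 * x)))) by (field; nra).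
    apply Rmult_le_compat_l; lra.
Qed.

Lemma profile_bound_small_th2 L th1 th2 x k :
  0 < L -> 0 < th1 -> 0 < th2 -> th2 < 1 / L -> 0 <= x <= L ->
  0 < (L - x) * (1 + th2 * x) -> k < th1 / L ->
  k * ((L - x) * (1 + th2 * x)) < th1.
Proof.
  intros hL h1 h2 hth hx hg hk.
  assert (hL1 : th2 * L <= 1).
  { apply Rmult_lt_compat_r with (r := L) in hth; [| exact hL].
    unfold Rdiv in hth; rewrite Rmult_1_l, Rinv_l in hth; lra. }
  assert (hgL := profile_le_L L th2 x ltac:(lra) hL1 hx).
  apply Rlt_le_trans with (th1 / L * ((L - x) * (1 + th2 * x))).
  - apply Rmult_lt_compat_r; assumption.
  - apply Rmult_le_reg_r with L; [exact hL |].
    replace (th1 / L * ((L - x) * (1 + th2 * x)) * L)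
      with (th1 * ((L - x) * (1 + th2 * x))) by (field; lra).
    nra.
Qed.

Theorem mainTheorem4 (L th1 th2 eps om vmax : R)
  (hL : 0 < L) (h1 : 0 < th1) (h2 : 0 < th2)
  (he0 : 0 <= eps) (he1 : eps < 1) (hom : 0 <= om)
  (hv0 : 0 < vmax) (hv1 : vmax < 1)
  (hcond :
     (0 <= eps * om / (1 - eps) ^ 2 /\
      eps * om / (1 - eps) ^ 2 < th1 * th2 / (1 + th2 * L) ^ 2)
  \/ (th1 * th2 / (1 + th2 * L) ^ 2 < eps * om / (1 - eps) ^ 2 /\
      eps * om / (1 - eps) ^ 2 < th1 / L /\ th2 < 1 / L)
  \/ (th1 * th2 / (1 + th2 * L) ^ 2 < eps * om / (1 - eps) ^ 2 /\
      eps * om / (1 - eps) ^ 2 < 4 * th1 * th2 / (1 + th2 * L) ^ 2 /\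
      th2 > 1 / L)) :
  forall t x U : R, 0 <= t -> 0 < x -> x < L -> 0 <= U -> U <= vmax ->
    exists dDt dDx : R,
      derivable_pt_lim (fun s => Dfun L th1 eps om s x) t dDt /\
      derivable_pt_lim (fun y => Dfun L th1 eps om t y) x dDx /\
      dDt + dDx * ffun th1 th2 eps om t x U < 1.
Proof.
  intros t x U _ hx0 hxL hU0 hU1.
  set (k := eps * om / (1 - eps) ^ 2) in hcond.
  assert (hc : cfun th1 eps om t <> 0)
    by (assert (hge := cfun_ge th1 eps om t ltac:(lra) he0); nra).
  assert (hg : 0 < (L - x) * (1 + th2 * x)) by (apply Rmult_lt_0_compat; nra).
  assert (hkey : k * ((L - x) * (1 + th2 * x)) < th1).
  { assert (hsq : 0 < (1 + th2 * L) ^ 2) by nra.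
    assert (h4 : th1 * th2 / (1 + th2 * L) ^ 2 <= 4 * th1 * th2 / (1 + th2 * L) ^ 2)
      by (unfold Rdiv; apply Rmult_le_compat_r;
          [apply Rlt_le, Rinv_0_lt_compat, hsq | nra]).
    destruct hcond as [[_ hk] | [[_ [hk hth]] | [_ [hk _]]]].
    - apply profile_bound_amgm; lra.
    - apply profile_bound_small_th2; lra.
    - apply profile_bound_amgm; lra. }
  exists ((L - x) * (th1 * eps * om * sin (om * t)) / cfun th1 eps om t ^ 2),
         (-1 / cfun th1 eps om t).
  split; [now apply derivable_pt_lim_Dfun_t |].
  split; [now apply derivable_pt_lim_Dfun_x |].
  rewrite Dfun_x_mul_ffun by exact hc.
  assert (hDt := Dfun_t_rate_le L th1 eps om t x ltac:(lra) h1 (conj he0 he1) hom).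
  assert (hGam := Gam_le th2 x U ltac:(nra) ltac:(lra)).
  assert (hsplit : (L - x) * k / th1 < 1 / (1 + th2 * x)).
  { apply Rmult_lt_reg_r with (th1 * (1 + th2 * x)); [nra |].
    field_simplify; nra. }
  unfold k in hsplit; lra.
Qed.
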